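(* Suppose $\mathbb{Q}_1$ is a probability measure on $(\Omega,\mathcal F(T))$ such that each $S_{1,j}$, $j=1,\dots,d$, is a real-valued (in particular finite) nonnegative $\mathbb{Q}_1$-martingale (possibly hitting $0$). Define probability measures $\mathbb{Q}_i$ by $\frac{\mathrm d\mathbb{Q}_i}{\mathrm d\mathbb{Q}_1}=S_{i,1}(0)S_{1,i}(T)$, $i=1,\dots,d$. Then $(\mathbb{Q}_i)_i$ is a numéraire-consistent family, each $\mathbb{Q}_i$ is absolutely continuous with respect to $\mathbb{Q}_1$, and $\sum_i\mathbb{Q}_i\sim\mathbb{Q}_1$. Moreover, if $\overline{\mathbb{Q}}$ denotes the corresponding valuation measure with respect to the basket (i.e. $\overline{\mathbb Q}=\sum_i\overline S_i(0)\mathbb Q_i$), then for all $r\in[0,T]$ and $C\in\mathcal C$ with $\overline C\in L^1(\overline{\mathbb Q})$ one has $\mathbb{E}^{\overline{\mathbb{Q}}}_r[\overline C]=\overline S_1(r)\mathbb E^{\mathbb Q_1}_r[C_1]$, and for each $i$, on the event $\{i\in\mathfrak A(r)\}$, $$\frac{\mathbb{E}^{\overline{\mathbb{Q}}}_r[\overline C]}{\overline S_i(r)}=\mathbb{E}^{\mathbb{Q}_i}_r[C_i]+S_{i,1}(r)\,\mathbb{E}^{\mathbb{Q}_1}_r\big[C_1\mathbf 1_{\{S_{1,i}(T)=0\}}\big].$$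
   Context: Fix $T>0$, $d\in\mathbb N$, and a filtered space $(\Omega,\mathcal{F}(T),(\mathcal{F}(t))_{t\in[0,T]})$ with right-continuous filtration and trivial $\mathcal{F}(0)$. For $x,y\in[0,\infty]$ the product $xy$ is defined except when one is $0$ and the other is $\infty$. An exchange matrix is $s=(s_{i,j})\in[0,\infty]^{d\times d}$ with $s_{i,i}=1$ and $s_{i,j}s_{j,k}=s_{i,k}$ for all $i,j,k$ whenever the product is defined. $S=(S_{i,j})_{i,j=1}^d$ is a right-continuous adapted $[0,\infty]^{d\times d}$-valued process such that $S(t)$ is an exchange matrix for every $t$. Active currencies: $\mathfrak{A}(t)=\{i:\sum_jS_{i,j}(t)<\infty\}$, with $\mathfrak A(0)=\{1,\dots,d\}$. Basket prices: $\overline S_i=1/\sum_jS_{i,j}$. A value vector for an exchange matrix $s$ is $v\in[0,\infty]^d$ with $s_{i,j}v_j=v_i$ whenever defined; $\mathcal{C}$ is the set of $\mathcal{F}(T)$-measurable value vectors for $S(T)$, and for $C\in\mathcal C$, $\overline C=\frac{1}{|\mathfrak{A}(T)|}\sum_{j\in\mathfrak{A}(T)}\overline S_j(T)C_j$. A family $(\mathbb{Q}_i)_{i=1}^d$ of probability measures is numéraire-consistent if $\mathbb{E}^{\mathbb{Q}_i}[S_{i,j}(t)\mathbf{1}_A]=S_{i,j}(0)\,\mathbb{Q}_j(A\cap\{S_{j,i}(t)>0\})$ for all $i,j$, $t\in[0,T]$, $A\in\mathcal{F}(t)$. A valuation measure with respect to the basket is a probability measure under which $\overline S$ is a martingale.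 $\mathbb{E}^{\mathbb Q}_r$ is conditional expectation given $\mathcal F(r)$. *)

From HB Require Import structures.
From mathcomp Require Import all_boot all_order all_algebra.
From mathcomp Require Import all_classical all_reals all_analysis measurable_realfun.
Set Implicit Arguments. Unset Strict Implicit. Unset Printing Implicit Defensive.
Import Order.TTheory GRing.Theory Num.Theory.
Local Open Scope classical_set_scope.
Local Open Scope ring_scope.
Local Open Scope ereal_scope.

Section Defs.
Context {R : realType}.

Definition prod_defined (x y : \bar R) : Prop :=
  ~ ((x = 0 /\ y = +oo) \/ (x = +oo /\ y = 0)).

Definition exchange_matrix (d : nat) (s : 'I_d -> 'I_d -> \bar R) : Prop :=
  [/\ forall i j, 0 <= s i j,
      forall i, s i i = 1 &
      forall i j k, prod_defined (s i j) (s j k) -> s i j * s j k = s i k].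

Definition value_vector (d : nat) (s : 'I_d -> 'I_d -> \bar R)
    (v : 'I_d -> \bar R) : Prop :=
  (forall j, 0 <= v j) /\
  (forall i j, prod_defined (s i j) (v j) -> s i j * v j = v i).

Context {dO : measure_display} {Omega : measurableType dO}.

Definition G_measurable (G : set (set Omega)) (f : Omega -> \bar R) : Prop :=
  forall B : set (\bar R), measurable B -> G (f @^-1` B).

Definition filtration (T : R) (F : R -> set (set Omega)) : Prop :=
  [/\ forall t, (0 <= t <= T)%R -> sigma_algebra setT (F t),
      forall s t, (0 <= s)%R -> (s <= t)%R -> (t <= T)%R -> F s `<=` F t,
      F T = [set A | measurable A],
      forall t, (0 <= t)%R -> (t < T)%R ->
        F t = [set A | forall u, (t < u)%R -> (u <= T)%R -> F u A] &
      forall A, F 0%R A -> A = set0 \/ A = setT].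

Definition active (d : nat) (S : 'I_d -> 'I_d -> R -> Omega -> \bar R)
    (t : R) (x : Omega) (i : 'I_d) : bool :=
  \sum_(j < d) S i j t x < +oo.

Definition Sbar (d : nat) (S : 'I_d -> 'I_d -> R -> Omega -> \bar R)
    (i : 'I_d) (t : R) (x : Omega) : \bar R :=
  (\sum_(j < d) S i j t x)^-1.

Definition Cbar (d : nat) (S : 'I_d -> 'I_d -> R -> Omega -> \bar R)
    (T : R) (C : 'I_d -> Omega -> \bar R) (x : Omega) : \bar R :=
  ((#|[pred j | active S T x j]|%:R)^-1)%:E *
  \sum_(j < d | active S T x j) (Sbar S j T x * C j x).

Definition numeraire_consistent (d : nat) (T : R) (F : R -> set (set Omega))
    (S : 'I_d -> 'I_d -> R -> Omega -> \bar R)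
    (Q : 'I_d -> probability Omega R) : Prop :=
  forall i j t A, (0 <= t <= T)%R -> F t A ->
    forall x0 : Omega,  (* S(0) is deterministic since F(0) is trivial *)
    \int[Q i]_(x in A) S i j t x =
      S i j 0%R x0 * Q j (A `&` [set x | 0 < S j i t x]).

(** Y is a version of the (generalized, [0,oo]-valued) conditional expectation
    E^P[X | G] of a nonnegative random variable X *)
Definition cond_exp (P : probability Omega R) (G : set (set Omega))
    (X Y : Omega -> \bar R) : Prop :=
  [/\ G_measurable G Y, forall x, 0 <= Y x &
      forall A, G A -> \int[P]_(x in A) Y x = \int[P]_(x in A) X x].

End Defs.

From HB Require Import structures.
From mathcomp Require Import all_boot all_order all_algebra.
From mathcomp Require Import all_classical all_reals all_analysis measurable_realfun.
Import Order.TTheory GRing.Theory Num.Theory.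
Local Open Scope classical_set_scope.
Local Open Scope ring_scope.
Local Open Scope ereal_scope.
Set Implicit Arguments. Unset Strict Implicit. Unset Printing Implicit Defensive.

(** Everything is measured in the numeraire currency [o] (the paper's currency 1),
    whose exchange rates [S_{o,j}] are finite nonnegative [Q1]-martingales.
    [Q_i] has density [S_{o,i}(T) / S_{o,i}(0)] with respect to [Q1], and by the
    martingale property its restriction to [F t] has density
    [S_{o,i}(t) / S_{o,i}(0)]; numeraire consistency then reduces to the pointwise
    identity [S_{i,j} S_{o,i} = 1_{S_{j,i} > 0} S_{o,j}] for exchange matrices.
    The basket measure has density proportional to [sum_j S_{o,j}] = [1 / Sbar_o],
    and [Cbar = Sbar_o(T) C_o] for value vectors, so [E_r[Cbar] / Sbar_o(r)] and
    [E^{Q1}_r[C_o]] have the same integrals over [F r]-sets; uniqueness of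
    conditional expectations gives the first identity, and splitting [C_o] along
    [{S_{o,i}(T) = 0}] gives the second. *)

(** * Measures with a density *)

Section density_measure.
Context d (T : measurableType d) (R : realType) (mu : {measure set T -> \bar R}).

Definition density_measure (g : T -> \bar R) (mg : measurable_fun setT g)
    (g0 : forall x, 0 <= g x) (gfin : \int[mu]_x g x < +oo) : set T -> \bar R :=
  fun A => \int[mu]_(x in A) g x.

Variables (g : T -> \bar R) (mg : measurable_fun setT g) (g0 : forall x, 0 <= g x)
  (gfin : \int[mu]_x g x < +oo).

Local Notation nu := (density_measure mg g0 gfin).

Let nu0 : nu set0 = 0. Proof. exact: integral_set0. Qed.
Let nu_ge0 A : 0 <= nu A. Proof. exact: integral_ge0. Qed.
Let nu_sigma_additive : semi_sigma_additive nu.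
Proof. exact: semi_sigma_additive_nng_induced. Qed.

HB.instance Definition _ := isMeasure.Build _ _ _ nu nu0 nu_ge0 nu_sigma_additive.

Let nu_fin : fin_num_fun nu.
Proof.
move=> A mA; rewrite ge0_fin_numE ?nu_ge0//; apply: le_lt_trans gfin.
exact: ge0_subset_integral.
Qed.

HB.instance Definition _ := Measure_isFinite.Build _ _ _ nu nu_fin.

End density_measure.

Section density_probability.
Context d (T : measurableType d) (R : realType) (P : probability T R).

Definition density_probability (g : T -> \bar R) (mg : measurable_fun setT g)
    (g0 : forall x, 0 <= g x) (g1 : \int[P]_x g x = 1) : set T -> \bar R :=
  fun A => \int[P]_(x in A) g x.

Variables (g : T -> \bar R) (mg : measurable_fun setT g) (g0 : forall x, 0 <= g x)
  (g1 : \int[P]_x g x = 1).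

Local Notation Q := (density_probability mg g0 g1).

Let Q0 : Q set0 = 0. Proof. exact: integral_set0. Qed.
Let Q_ge0 A : 0 <= Q A. Proof. exact: integral_ge0. Qed.
Let Q_sigma_additive : semi_sigma_additive Q.
Proof. exact: semi_sigma_additive_nng_induced. Qed.

HB.instance Definition _ := isMeasure.Build _ _ _ Q Q0 Q_ge0 Q_sigma_additive.
HB.instance Definition _ := Measure_isProbability.Build _ _ _ Q g1.

End density_probability.

Section integral_density.
Context d (T : measurableType d) (R : realType).
Variables (mu : {sigma_finite_measure set T -> \bar R}) (nu : {finite_measure set T -> \bar R}).
Variables (g : T -> \bar R) (mg : measurable_fun setT g).
Hypothesis nuE : forall A, measurable A -> nu A = \int[mu]_(x in A) g x.

Lemma integral_density (f : T -> \bar R) (E : set T) : (forall x, 0 <= f x) ->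
  measurable E -> measurable_fun E f ->
  \int[nu]_(x in E) f x = \int[mu]_(x in E) (f x * g x).
Proof.
move=> f0 mE mf.
(* [g] is a.e. equal to the Radon-Nikodym derivative of [nu] with respect to [mu]. *)
have numu : nu `<< mu.
  apply/null_content_dominatesP => A mA muA0.
  by rewrite nuE// null_set_integral//; exact: measurable_funTS.
set rn := Radon_Nikodym_SigmaFinite.f nu mu.
have rn_g : ae_eq mu E rn g.
  apply: integral_ae_eq => //.
  - exact/(integrableS measurableT)/Radon_Nikodym_SigmaFinite.f_integrable.
  - exact: measurable_funTS.
  - by move=> A AE mA; rewrite -Radon_Nikodym_SigmaFinite.f_integral// nuE.
rewrite -(Radon_Nikodym_SigmaFinite.change_of_variables numu)//.
apply: ae_eq_integral => //.
- apply: emeasurable_funM => //; apply: measurable_funTS.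
  exact: measurable_int (Radon_Nikodym_SigmaFinite.f_integrable numu).
- by apply: emeasurable_funM => //; exact: measurable_funTS.
- exact: ae_eqe_mul2l.
Qed.

End integral_density.

(** * Sub-sigma-algebras *)

(* The restriction of [mu] to the sigma-algebra generated by [G], i.e. the
   pushforward of [mu] along the identity [T -> g_sigma_algebraType G]. *)
Section subsigma_measure.
Context d (T : measurableType d) (R : realType) (G : set (set T)).

Definition subsigma_measure (mu : {measure set T -> \bar R})
  (GM : G `<=` measurable) : set (g_sigma_algebraType G) -> \bar R := mu.

Variables (mu : {measure set T -> \bar R}) (GM : G `<=` measurable).

Let sGM : <<s G>> `<=` measurable.
Proof. by apply: smallest_sub => //; exact: sigma_algebra_measurable. Qed.

Let subsigma_measure0 : subsigma_measure mu GM set0 = 0.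
Proof. exact: measure0. Qed.

Let subsigma_measure_ge0 A : 0 <= subsigma_measure mu GM A.
Proof. exact: measure_ge0. Qed.

Let subsigma_measure_sigma_additive : semi_sigma_additive (subsigma_measure mu GM).
Proof.
move=> F mF tF mUF; apply: measure_semi_sigma_additive => //.
- by move=> n; apply: sGM; exact: mF.
- by apply: sGM; exact: mUF.
Qed.

HB.instance Definition _ := isMeasure.Build _ _ _ (subsigma_measure mu GM)
  subsigma_measure0 subsigma_measure_ge0 subsigma_measure_sigma_additive.

End subsigma_measure.

Section sub_sigma_algebra.
Context d (T : measurableType d) (R : realType) (G : set (set T)).
Hypotheses (GM : G `<=` measurable) (sG : sigma_algebra setT G).
Implicit Types f g : T -> \bar R.

Let G' := g_sigma_algebraType G.

Lemma G_measurableP f : G_measurable G f <-> measurable_fun setT (f : G' -> \bar R).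
Proof.
split=> [Gf _ B mB|mf B mB]; first by rewrite setTI; apply: sub_sigma_algebra; exact: Gf.
suff : <<s G>> (f @^-1` B) by rewrite sigma_algebra_id.
by rewrite -[_ @^-1` _]setTI; exact: mf.
Qed.

Lemma G_measurable_measurable_fun f : G_measurable G f -> measurable_fun setT f.
Proof. by move=> Gf mD B mB; apply: measurableI => //; exact/GM/Gf. Qed.

Lemma G_measurableD f g : G_measurable G f -> G_measurable G g ->
  G_measurable G (f \+ g).
Proof. by move=> /G_measurableP mf /G_measurableP mg; exact/G_measurableP/emeasurable_funD. Qed.

Lemma G_measurableM f g : G_measurable G f -> G_measurable G g ->
  G_measurable G (f \* g).
Proof. by move=> /G_measurableP mf /G_measurableP mg; exact/G_measurableP/emeasurable_funM. Qed.

Lemma G_measurable_sum I (r : seq I) (h : I -> T -> \bar R) :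
  (forall i, G_measurable G (h i)) -> G_measurable G (fun x => \sum_(i <- r) h i x).
Proof. by move=> Gh; apply/G_measurableP/emeasurable_sum => i; exact/G_measurableP. Qed.

Lemma G_setI A B : G A -> G B -> G (A `&` B).
Proof.
move=> GA GB; suff : <<s G>> (A `&` B) by rewrite sigma_algebra_id.
by apply: (@measurableI _ G'); exact: sub_sigma_algebra.
Qed.

Let G_setT : G setT.
Proof. by case: sG => G0 GD _; rewrite -(setD0 setT); exact: GD. Qed.

Local Notation restrict_G mu := (subsigma_measure mu GM).

Let integral_restrict_G (mu : {measure set T -> \bar R}) f A : G A ->
  G_measurable G f -> (forall x, 0 <= f x) ->
  \int[restrict_G mu]_(x in (A : set G')) f x = \int[mu]_(x in A) f x.
Proof.
move=> GA Gf f0.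
have mid : measurable_fun setT (id : T -> G').
  by move=> _ B mB; rewrite setTI; apply: GM; rewrite -(sigma_algebra_id sG).
rewrite -[LHS]/(\int[pushforward mu (id : T -> G')]_(x in (A : set G')) f x).
rewrite (ge0_integral_pushforward mid)//.
- exact: sub_sigma_algebra.
- by apply: measurable_funTS; apply/G_measurableP.
Qed.

Lemma G_measurable_ae_eq (mu : {measure set T -> \bar R}) f g :
  G_measurable G f -> G_measurable G g ->
  (forall x, 0 <= f x) -> (forall x, 0 <= g x) -> \int[mu]_x f x < +oo ->
  (forall A, G A -> \int[mu]_(x in A) f x = \int[mu]_(x in A) g x) ->
  {ae mu, forall x, f x = g x}.
Proof.
move=> Gf Gg f0 g0 fi fg.
have : ae_eq (restrict_G mu) setT (f : G' -> \bar R) g.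
  apply: integral_ae_eq => //.
  - apply/integrableP; split; first exact/G_measurableP.
    under eq_integral do rewrite gee0_abs//.
    by rewrite integral_restrict_G.
  - exact/G_measurableP.
  - move=> B _ mB; have GB : G B by rewrite -(sigma_algebra_id sG).
    by rewrite !integral_restrict_G// fg.
case=> N [mN N0 fgN]; exists N; split => //.
- by apply: GM; rewrite -(sigma_algebra_id sG).
- by move=> x /= nfgx; apply: fgN => /= fgx; exact/nfgx/fgx.
Qed.

(* The tower property: both sides integrate [f] against the restrictions to [G]
   of the measures with densities [M1] and [M2], and these restrictions agree. *)
Lemma eq_integralM_G (mu : {sigma_finite_measure set T -> \bar R})
    (M1 M2 : T -> \bar R) :
  measurable_fun setT M1 -> measurable_fun setT M2 ->
  (forall x, 0 <= M1 x) -> (forall x, 0 <= M2 x) -> \int[mu]_x M1 x < +oo ->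
  (forall B, G B -> \int[mu]_(x in B) M1 x = \int[mu]_(x in B) M2 x) ->
  forall f A, G_measurable G f -> (forall x, 0 <= f x) -> G A ->
  \int[mu]_(x in A) (f x * M1 x) = \int[mu]_(x in A) (f x * M2 x).
Proof.
move=> mM1 mM2 M10 M20 M1fin M12 f A Gf f0 GA.
have M2fin : \int[mu]_x M2 x < +oo by rewrite -M12.
have mA : measurable A by exact: GM.
have mf : measurable_fun A f by exact/measurable_funTS/G_measurable_measurable_fun.
rewrite -(@integral_density _ _ _ mu (density_measure mM1 M10 M1fin))//.
rewrite -(@integral_density _ _ _ mu (density_measure mM2 M20 M2fin))//.
rewrite -!integral_restrict_G//; apply: eq_measure_integral => B mB _.
by rewrite /subsigma_measure /= /density_measure M12// -(sigma_algebra_id sG).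
Qed.

Lemma integral_density_G (mu : {sigma_finite_measure set T -> \bar R})
    (nu : {finite_measure set T -> \bar R}) (g h : T -> \bar R) :
  measurable_fun setT g -> measurable_fun setT h ->
  (forall x, 0 <= g x) -> (forall x, 0 <= h x) ->
  (forall A, measurable A -> nu A = \int[mu]_(x in A) g x) ->
  (forall B, G B -> \int[mu]_(x in B) g x = \int[mu]_(x in B) h x) ->
  forall f B, G_measurable G f -> (forall x, 0 <= f x) -> G B ->
  \int[nu]_(x in B) f x = \int[mu]_(x in B) (f x * h x).
Proof.
move=> mg mh g0 h0 nuE gh f B Gf f0 GB; have mB := GM GB.
rewrite (integral_density mg nuE)//; last exact/measurable_funTS/G_measurable_measurable_fun.
apply: eq_integralM_G => //.
by rewrite -nuE// ltey_eq fin_num_measure.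
Qed.

End sub_sigma_algebra.

Lemma trivial_G_measurable_cst d (T : measurableType d) (R : realType)
    (G : set (set T)) (f : T -> \bar R) :
  (forall A, G A -> A = set0 \/ A = setT) -> G_measurable G f ->
  forall x y, f x = f y.
Proof.
move=> G01 Gf x y; have [E|E] := G01 _ (Gf _ (emeasurable_set1 (f x))).
- by have : (f @^-1` [set f x]) x by []; rewrite E.
- by have : (f @^-1` [set f x]) y by rewrite E.
Qed.

(** * Exchange matrices *)

Section exchange_matrix.
Context {R : realType} (d : nat) (s : 'I_d -> 'I_d -> \bar R).
Hypothesis hs : exchange_matrix s.

Let s_ge0 i j : 0 <= s i j. Proof. by case: hs. Qed.

Let s_diag i : s i i = 1. Proof. by case: hs. Qed.

Let prod_defined_pos (r : R) y : (0 < r)%R -> prod_defined r%:E y.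
Proof. by move=> r0 [] [] // [] r0'; rewrite r0' ltxx in r0. Qed.

Let row_sum_ge (i j : 'I_d) : s i j <= \sum_k s i k.
Proof. by rewrite (bigD1 j)//= leeDl// sume_ge0. Qed.

Lemma exchange_matrixM i j k (r : R) : (0 < r)%R -> s i j = r%:E ->
  s i k = s i j * s j k.
Proof. by case: hs => _ _ sM r0 sij; rewrite sM// sij; exact: prod_defined_pos. Qed.

Lemma exchange_matrixV i j (r : R) : (0 < r)%R -> s i j = r%:E ->
  s j i = (r^-1)%:E.
Proof.
move=> r0 sij; have := exchange_matrixM i r0 sij; rewrite s_diag sij.
have := s_ge0 j i; case: (s j i) => [b _|_|//].
- by rewrite -EFinM => -[/esym/(canRL (mulKf (lt0r_neq0 r0)))]; rewrite mulr1 => ->.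
- by rewrite gt0_muley ?lte_fin.
Qed.

Lemma exchange_matrix_fin i j : s i j < +oo -> s j i < +oo ->
  exists2 r : R, (0 < r)%R & s i j = r%:E.
Proof.
case: hs => _ _ sM; have := s_ge0 i j; have := s_ge0 j i.
case E1 : (s i j) => [a| |]//; case E2 : (s j i) => [b| |]// b0 a0 _ _.
have ab1 : (a * b = 1)%R.
  apply: EFin_inj; rewrite EFinM -E1 -E2 sM ?s_diag//.
  by rewrite E1 E2 => -[[]|[]].
exists a => //; rewrite lt0r -lee_fin a0 andbT.
by apply: contra_eq_neq ab1 => ->; rewrite mul0r eq_sym oner_neq0.
Qed.

Lemma exchange_matrix_sum i j (r : R) : (0 < r)%R -> s i j = r%:E ->
  \sum_k s i k = r%:E * \sum_k s j k.
Proof.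
move=> r0 sij; rewrite ge0_sume_distrr//.
by apply: eq_bigr => k _; rewrite -sij; exact: (exchange_matrixM k r0 sij).
Qed.

Variable o : 'I_d.
Hypothesis s_fin : forall j, s o j < +oo.

Lemma row_sum_fin : exists2 del : R, (1 <= del)%R & \sum_j s o j = del%:E.
Proof.
exists (\sum_j fine (s o j))%R; last first.
  by rewrite -sumEFin; apply: eq_bigr => j _; rewrite fineK// ge0_fin_numE.
rewrite -lee_fin -sumEFin -(s_diag o) (le_trans (row_sum_ge o o))//.
by apply: lee_sum => j _; rewrite fineK// ge0_fin_numE.
Qed.

Lemma active_rate i : \sum_k s i k < +oo ->
  exists2 r : R, (0 < r)%R & s o i = r%:E /\ s i o = (r^-1)%:E.
Proof.
move=> i_act; have [r r0 sio] := exchange_matrix_fin (le_lt_trans (row_sum_ge i o) i_act) (s_fin i).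
exists r^-1%R; first by rewrite invr_gt0.
by rewrite invrK; split => //; exact: (exchange_matrixV r0 sio).
Qed.

Lemma basket_price_active i : \sum_k s i k < +oo ->
  (\sum_k s i k)^-1 = s o i * (\sum_k s o k)^-1.
Proof.
move=> /active_rate[r r0 [soi sio]]; have [del del1 sumo] := row_sum_fin.
have del0 : del != 0%R by rewrite gt_eqF// (lt_le_trans ltr01).
rewrite (exchange_matrix_sum _ sio) ?invr_gt0// sumo soi -EFinM !inver.
by rewrite mulf_eq0 invr_eq0 (gt_eqF r0) (negbTE del0) invfM invrK.
Qed.

Lemma value_vector_active (c : 'I_d -> \bar R) i : value_vector s c ->
  \sum_k s i k < +oo -> (\sum_k s i k)^-1 * c i = (\sum_k s o k)^-1 * c o.
Proof.
move=> [_ sc] i_act; have [r r0 [soi _]] := active_rate i_act.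
rewrite basket_price_active// (muleC (s o i)) -muleA sc// soi.
exact: prod_defined_pos.
Qed.

Let row_entry k : s o k = 0 \/ exists2 r : R, (0 < r)%R & s o k = r%:E.
Proof.
have := s_ge0 o k; have := s_fin k; case: (s o k) => [r _| |]// r0.
rewrite lee_fin le_eqVlt in r0; case/orP: r0 => [/eqP <-|r0]; first by left.
by right; exists r.
Qed.

Let row_rate j k (r : R) : (0 < r)%R -> s o j = r%:E -> s j k = (r^-1)%:E * s o k.
Proof.
move=> r0 soj; have r0' : (0 < r^-1)%R by rewrite invr_gt0.
by rewrite (exchange_matrixM k r0' (exchange_matrixV r0 soj)) (exchange_matrixV r0 soj).
Qed.

Lemma exchange_transfer i j : s i j * s o i = if 0 < s j i then s o j else 0.
Proof.
have [soj0|[r r0 soj]] := row_entry j.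
  rewrite soj0 if_same; have [->|[p p0 soi]] := row_entry i; first by rewrite mule0.
  move: soj0; rewrite (exchange_matrixM j p0 soi) soi => /eqP.
  by rewrite mule_eq0 eqe (gt_eqF p0) => /eqP ->; rewrite mul0e.
rewrite (row_rate i r0 soj); have [->|[p p0 soi]] := row_entry i.
  by rewrite !mule0 ltxx.
rewrite soi -EFinM lte_fin mulr_gt0 ?invr_gt0//.
by rewrite (exchange_matrixM j p0 soi) soi muleC.
Qed.

Lemma value_vector_row (c : 'I_d -> \bar R) i : value_vector s c ->
  c i * s o i = if s o i == 0 then 0 else c o.
Proof.
move=> [_ sc]; have [soi0|[r r0 soi]] := row_entry i; first by rewrite soi0 eqxx mule0.
by rewrite soi gt_eqF ?lte_fin// muleC -soi sc// soi; exact: prod_defined_pos.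
Qed.

Lemma change_numeraire i (y w v : \bar R) : \sum_k s i k < +oo ->
  0 <= w -> 0 <= v -> y * \sum_k s o k = w * s o i + v ->
  y * \sum_k s i k = w + s i o * v.
Proof.
move=> /active_rate[r r0 [soi sio]] w0 v0 yw.
have r0' : (0 < r^-1)%R by rewrite invr_gt0.
have wsoi0 : 0 <= w * s o i by rewrite soi mule_ge0// lee_fin ltW.
rewrite (exchange_matrix_sum r0' sio) muleCA yw sio ge0_muleDr// soi.
by rewrite muleCA -EFinM mulVf ?mule1// gt_eqF.
Qed.

End exchange_matrix.

Section basket.
Context {R : realType} {dO : measure_display} {Omega : measurableType dO} (d : nat).
Variables (S : 'I_d -> 'I_d -> R -> Omega -> \bar R) (t : R) (x : Omega) (o : 'I_d).
Hypotheses (hS : exchange_matrix (fun i j => S i j t x)) (S_fin : forall j, S o j t x < +oo).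

Lemma Cbar_numeraire (C : 'I_d -> Omega -> \bar R) :
  value_vector (fun i j => S i j t x) (C ^~ x) -> Cbar S t C x = Sbar S o t x * C o x.
Proof.
move=> hC; rewrite /Cbar (eq_bigr (fun=> Sbar S o t x * C o x)); last first.
  by move=> j j_act; exact: (value_vector_active hS S_fin hC j_act).
have o_act : active S t x o.
  by rewrite /active; have [del _ ->] := row_sum_fin hS S_fin; exact: ltry.
rewrite (eq_bigl [in [pred j | active S t x j]]) ?sumr_const; last first.
  by move=> j; rewrite inE.
have natmulE (y : \bar R) n : (y *+ n)%R = n%:R%:E * y by rewrite mule_natl.
rewrite natmulE muleA -EFinM mulVf ?mul1e//.
by rewrite pnatr_eq0 -lt0n; apply/card_gt0P; exists o.
Qed.

End basket.

Lemma measurable_funeV_ge1 d (T : measurableType d) (R : realType) (f : T -> \bar R) :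
  measurable_fun setT f -> (forall x, exists2 r : R, (1 <= r)%R & f x = r%:E) ->
  measurable_fun setT (fun x => (f x)^-1).
Proof.
move=> mf f_ge1.
(* [max 1] makes the real inverse nonincreasing on all of [R]. *)
have -> : (fun x => (f x)^-1) = (fun x => ((Num.max 1 (fine (f x)))^-1)%:E).
  apply/funext => x; have [r r1 ->] := f_ge1 x.
  by rewrite inver gt_eqF ?(lt_le_trans ltr01)//= max_r.
apply/measurable_EFinP.
apply: (measurableT_comp (f := fun y : R => (Num.max 1 y)^-1%R) (g := fine \o f)).
  apply: nonincreasing_measurable => // y z yz.
  have max_pos (u : R) : (Num.max 1 u \in Num.pos)%R.
    by rewrite posrE (lt_le_trans ltr01)// le_max lexx.
  by rewrite lef_pV2 ?max_pos// le_max2.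
exact: measurableT_comp (fine_measurable measurableT) mf.
Qed.

(** * Change of numeraire *)

Section numeraire_change.
Context {R : realType} {dO : measure_display} {Omega : measurableType dO}.
Variables (T : R) (F : R -> set (set Omega)) (d : nat) (o : 'I_d)
  (S : 'I_d -> 'I_d -> R -> Omega -> \bar R) (Q1 : probability Omega R).
Hypotheses (T_gt0 : (0 < T)%R) (hF : filtration T F)
  (hS : forall t x, (0 <= t <= T)%R -> exchange_matrix (fun i j => S i j t x))
  (S_adapted : forall i j t, (0 <= t <= T)%R -> G_measurable (F t) (S i j t))
  (active0 : forall i x, active S 0%R x i)
  (S_fin : forall j t x, (0 <= t <= T)%R -> S o j t x < +oo)
  (S_mart : forall j s t A, (0 <= s)%R -> (s <= t)%R -> (t <= T)%R -> F s A ->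
     \int[Q1]_(x in A) S o j t x = \int[Q1]_(x in A) S o j s x).

Let T_range : (0 <= T <= T)%R. Proof. by rewrite ltW ?lexx. Qed.

Let zero_range : (0 <= (0 : R) <= T)%R. Proof. by rewrite lexx ltW. Qed.

Let F_measurable (t : R) : (0 <= t <= T)%R -> F t `<=` measurable.
Proof.
case: hF => _ Fmono FT _ _ /andP[t0 tT] A FA.
have : F T A by exact: (Fmono _ _ t0 tT (lexx T)).
by rewrite FT.
Qed.

Let F_sigma (t : R) : (0 <= t <= T)%R -> sigma_algebra setT (F t).
Proof. by case: hF => + _ _ _ _; apply. Qed.

Let F_setT (t : R) : (0 <= t <= T)%R -> F t setT.
Proof. by move=> /F_sigma[F0 FD _]; rewrite -(setD0 setT); exact: FD. Qed.

Let G_measurable_FT (f : Omega -> \bar R) : measurable_fun setT f -> G_measurable (F T) f.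
Proof.
case: hF => _ _ FT _ _ mf B mB; rewrite FT /=.
by rewrite -(setTI (f @^-1` B)); exact: mf.
Qed.

Let S_ge0 i j (t : R) x : (0 <= t <= T)%R -> 0 <= S i j t x.
Proof. by move=> /(hS x)[]. Qed.

Let S_measurable i j (t : R) : (0 <= t <= T)%R -> measurable_fun setT (S i j t).
Proof. by move=> t_range; exact (G_measurable_measurable_fun (F_measurable t_range) (S_adapted i j t_range)). Qed.

Let S_martT j (t : R) B : (0 <= t <= T)%R -> F t B ->
  \int[Q1]_(x in B) S o j T x = \int[Q1]_(x in B) S o j t x.
Proof. by move=> /andP[t0 tT]; exact: S_mart. Qed.

(* [S(0)] is deterministic because [F 0] is trivial; [rate j] is [S_{o,j}(0)]. *)
Definition rate j : R := fine (S o j 0%R point).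

Let S0_const i j x : S i j 0%R x = S i j 0%R point.
Proof.
apply: (trivial_G_measurable_cst _ (S_adapted i j zero_range)).
by case: hF.
Qed.

Let S0_fin i j x : S i j 0%R x < +oo.
Proof.
apply: le_lt_trans (active0 i x).
by rewrite (bigD1 j)//= leeDl// sume_ge0// => k _; exact: S_ge0.
Qed.

Lemma rate_gt0 j : (0 < rate j)%R.
Proof.
rewrite /rate; have [r r0 ->] := exchange_matrix_fin (hS point zero_range) (S0_fin o j point) (S0_fin j o point).
by [].
Qed.

Lemma S0_rate j x : S o j 0%R x = (rate j)%:E.
Proof. by rewrite S0_const fineK// ge0_fin_numE ?S0_fin ?S_ge0. Qed.

Lemma S0_rate_inv i x : S i o 0%R x = ((rate i)^-1)%:E.
Proof. exact: (exchange_matrixV (hS x zero_range) (rate_gt0 i) (S0_rate i x)). Qed.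

Lemma rate_o : rate o = 1%R.
Proof. by rewrite /rate; case: (hS point zero_range) => _ -> _. Qed.

Let integral_S j : \int[Q1]_x S o j T x = (rate j)%:E.
Proof.
rewrite (S_martT j zero_range (F_setT zero_range)).
under eq_integral do rewrite S0_rate.
by rewrite integral_cst// -[RHS]mule1; congr (_ * _); exact: probability_setT.
Qed.

Let rate_inv_ge0 i : (0 <= (rate i)^-1)%R.
Proof. by rewrite invr_ge0 ltW// rate_gt0. Qed.

Definition numeraire_density i (t : R) x := ((rate i)^-1)%:E * S o i t x.

Let numeraire_density_ge0 i (t : R) x : (0 <= t <= T)%R -> 0 <= numeraire_density i t x.
Proof.
by move=> t_range; rewrite mule_ge0 ?S_ge0// lee_fin invr_ge0 ltW// rate_gt0.
Qed.

Let numeraire_density_measurable i (t : R) : (0 <= t <= T)%R ->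
  measurable_fun setT (numeraire_density i t).
Proof. by move=> t_range; apply: emeasurable_funM => //; exact: S_measurable. Qed.

Let numeraire_density_mart i (t : R) B : (0 <= t <= T)%R -> F t B ->
  \int[Q1]_(x in B) numeraire_density i T x = \int[Q1]_(x in B) numeraire_density i t x.
Proof.
move=> t_range FB; have mB := F_measurable t_range FB.
rewrite !ge0_integralZl_EFin ?(S_martT _ t_range FB)//.
- by move=> x _; exact: S_ge0.
- exact/measurable_funTS/S_measurable.
- by move=> x _; exact: S_ge0.
- exact/measurable_funTS/S_measurable.
Qed.

Let numeraire_density_integral i : \int[Q1]_x numeraire_density i T x = 1.
Proof.
rewrite ge0_integralZl_EFin ?integral_S -?EFinM ?mulVf ?gt_eqF ?rate_gt0//.
- by move=> x _; exact: S_ge0.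
- exact: S_measurable.
Qed.

Definition numeraire_measure i : probability Omega R :=
  density_probability (numeraire_density_measurable i T_range)
    (fun x => numeraire_density_ge0 i x T_range) (numeraire_density_integral i).

Let numeraire_measure_density i A :
  numeraire_measure i A = \int[Q1]_(x in A) numeraire_density i T x.
Proof. by []. Qed.

Let integral_numeraire_density_G i (t : R) f B : (0 <= t <= T)%R ->
  G_measurable (F t) f -> (forall x, 0 <= f x) -> F t B ->
  \int[numeraire_measure i]_(x in B) f x =
  \int[Q1]_(x in B) (f x * numeraire_density i t x).
Proof.
move=> t_range.
apply: (integral_density_G (F_measurable t_range) (F_sigma t_range)
  (numeraire_density_measurable i T_range) (numeraire_density_measurable i t_range)).
- by move=> x; exact: numeraire_density_ge0.
- by move=> x; exact: numeraire_density_ge0.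
- by [].
- by move=> B' FB'; exact: numeraire_density_mart.
Qed.

Lemma integral_numeraire_measure i (t : R) f B : (0 <= t <= T)%R ->
  G_measurable (F t) f -> (forall x, 0 <= f x) -> F t B ->
  \int[numeraire_measure i]_(x in B) f x =
  ((rate i)^-1)%:E * \int[Q1]_(x in B) (f x * S o i t x).
Proof.
move=> t_range Gf f0 FB; have mB := F_measurable t_range FB.
rewrite (integral_numeraire_density_G i t_range Gf f0 FB).
under eq_integral do rewrite muleCA.
rewrite ge0_integralZl_EFin//.
- by move=> x _; rewrite mule_ge0// S_ge0.
- apply/measurable_funTS/emeasurable_funM; last exact: S_measurable.
  exact (G_measurable_measurable_fun (F_measurable t_range) Gf).
Qed.

Let basket_total_gt0 : (0 < \sum_j rate j)%R.
Proof.
rewrite (bigD1 o)//= rate_o ltr_pwDl//.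
by apply: sumr_ge0 => j _; exact/ltW/rate_gt0.
Qed.

Let basket_total_inv_ge0 : (0 <= (\sum_j rate j)^-1)%R.
Proof. by rewrite invr_ge0 ltW. Qed.

Definition basket_value (t : R) x := \sum_j S o j t x.

Let basket_value_ge0 (t : R) x : (0 <= t <= T)%R -> 0 <= basket_value t x.
Proof. by move=> t_range; apply: sume_ge0 => j _; exact: S_ge0. Qed.

Let basket_value_measurable (t : R) : (0 <= t <= T)%R ->
  measurable_fun setT (basket_value t).
Proof. by move=> t_range; apply: emeasurable_sum => j; exact: S_measurable. Qed.

Let basket_value_mart (t : R) B : (0 <= t <= T)%R -> F t B ->
  \int[Q1]_(x in B) basket_value T x = \int[Q1]_(x in B) basket_value t x.
Proof.
move=> t_range FB; have mB := F_measurable t_range FB.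
rewrite !ge0_integral_sum//.
- by apply: eq_bigr => j _; exact: S_martT.
- by move=> j; exact/measurable_funTS/S_measurable.
- by move=> j x _; exact: S_ge0.
- by move=> j; exact/measurable_funTS/S_measurable.
- by move=> j x _; exact: S_ge0.
Qed.

Let basket_value_ge1 (t : R) x : (0 <= t <= T)%R ->
  exists2 del : R, (1 <= del)%R & basket_value t x = del%:E.
Proof. by move=> t_range; exact (row_sum_fin (hS x t_range) (fun j => S_fin j x t_range)). Qed.

Definition basket_density (t : R) x := ((\sum_j rate j)^-1)%:E * basket_value t x.

Let basket_density_ge0 (t : R) x : (0 <= t <= T)%R -> 0 <= basket_density t x.
Proof. by move=> t_range; rewrite mule_ge0// basket_value_ge0. Qed.

Let basket_density_measurable (t : R) : (0 <= t <= T)%R ->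
  measurable_fun setT (basket_density t).
Proof. by move=> t_range; apply: emeasurable_funM => //; exact: basket_value_measurable. Qed.

Let basket_density_mart (t : R) B : (0 <= t <= T)%R -> F t B ->
  \int[Q1]_(x in B) basket_density T x = \int[Q1]_(x in B) basket_density t x.
Proof.
move=> t_range FB; have mB := F_measurable t_range FB.
rewrite !ge0_integralZl_EFin ?(basket_value_mart t_range FB)//.
- by move=> x _; exact: basket_value_ge0.
- exact/measurable_funTS/basket_value_measurable.
- by move=> x _; exact: basket_value_ge0.
- exact/measurable_funTS/basket_value_measurable.
Qed.

Let basket_density_integral : \int[Q1]_x basket_density T x = 1.
Proof.
rewrite ge0_integralZl_EFin//.
- rewrite ge0_integral_sum//.
  + by rewrite (eq_bigr _ (fun j _ => integral_S j)) sumEFin -EFinM mulVf ?gt_eqF.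
  + by move=> j; exact: S_measurable.
  + by move=> j x _; exact: S_ge0.
- by move=> x _; exact: basket_value_ge0.
- exact: basket_value_measurable.
Qed.

Definition basket_measure : probability Omega R :=
  density_probability (basket_density_measurable T_range)
    (fun x => basket_density_ge0 x T_range) basket_density_integral.

Let basket_measure_density A :
  basket_measure A = \int[Q1]_(x in A) basket_density T x.
Proof. by []. Qed.

Let integral_basket_density_G (t : R) f B : (0 <= t <= T)%R ->
  G_measurable (F t) f -> (forall x, 0 <= f x) -> F t B ->
  \int[basket_measure]_(x in B) f x = \int[Q1]_(x in B) (f x * basket_density t x).
Proof.
move=> t_range.
apply: (integral_density_G (F_measurable t_range) (F_sigma t_range)
  (basket_density_measurable T_range) (basket_density_measurable t_range)).
- by move=> x; exact: basket_density_ge0.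
- by move=> x; exact: basket_density_ge0.
- by [].
- by move=> B' FB'; exact: basket_density_mart.
Qed.

Lemma integral_basket_measure (t : R) f B : (0 <= t <= T)%R ->
  G_measurable (F t) f -> (forall x, 0 <= f x) -> F t B ->
  \int[basket_measure]_(x in B) f x =
  ((\sum_j rate j)^-1)%:E * \int[Q1]_(x in B) (f x * basket_value t x).
Proof.
move=> t_range Gf f0 FB; have mB := F_measurable t_range FB.
rewrite (integral_basket_density_G t_range Gf f0 FB).
under eq_integral do rewrite muleCA.
rewrite ge0_integralZl_EFin//.
- by move=> x _; rewrite mule_ge0// basket_value_ge0.
- apply/measurable_funTS/emeasurable_funM; last exact: basket_value_measurable.
  exact (G_measurable_measurable_fun (F_measurable t_range) Gf).
Qed.

Let numeraire_measure_rate i A : measurable A ->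
  numeraire_measure i A = ((rate i)^-1)%:E * \int[Q1]_(x in A) S o i T x.
Proof.
move=> mA; rewrite numeraire_measure_density ge0_integralZl_EFin//.
- by move=> x _; exact: S_ge0.
- exact/measurable_funTS/S_measurable.
Qed.

Lemma numeraire_measureE i A : measurable A ->
  numeraire_measure i A = \int[Q1]_(x in A) (S i o 0%R x * S o i T x).
Proof.
by move=> mA; rewrite numeraire_measure_density; apply: eq_integral => x _; rewrite S0_rate_inv.
Qed.

Lemma numeraire_measure_o A : measurable A -> numeraire_measure o A = Q1 A.
Proof.
move=> mA; rewrite numeraire_measure_density (eq_integral (cst 1)) ?integral_cst ?mul1e//.
move=> x _; rewrite /numeraire_density rate_o invr1 mul1e.
by case: (hS x T_range) => _ ->.
Qed.

Lemma numeraire_measure_abs_cont i A : measurable A -> Q1 A = 0 ->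
  numeraire_measure i A = 0.
Proof.
move=> mA Q1A; rewrite numeraire_measure_density null_set_integral//.
exact/measurable_funTS/numeraire_density_measurable.
Qed.

Lemma numeraire_measure_equiv A : measurable A ->
  Q1 A = 0 <-> \sum_i numeraire_measure i A = 0.
Proof.
move=> mA; split => [Q1A|]; first by rewrite big1// => i _; exact: numeraire_measure_abs_cont.
rewrite (bigD1 o)//= numeraire_measure_o// => /eqP.
by rewrite padde_eq0 ?measure_ge0 ?sume_ge0// => /andP[/eqP].
Qed.

Lemma Sbar0_rate i x : Sbar S i 0%R x = (rate i / \sum_j rate j)%:E.
Proof.
rewrite /Sbar (basket_price_active (hS x zero_range) (fun j => S_fin j x zero_range) (active0 i x)).
rewrite S0_rate (eq_bigr _ (fun j _ => S0_rate j x)) sumEFin inver gt_eqF//.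
Qed.

Lemma basket_measureE x0 A : measurable A ->
  basket_measure A = \sum_i Sbar S i 0%R x0 * numeraire_measure i A.
Proof.
move=> mA; rewrite basket_measure_density ge0_integralZl_EFin//; last 2 first.
- by move=> x _; exact: basket_value_ge0.
- exact/measurable_funTS/basket_value_measurable.
rewrite /basket_value ge0_integral_sum//; last 2 first.
- by move=> j; exact/measurable_funTS/S_measurable.
- by move=> j x _; exact: S_ge0.
rewrite ge0_sume_distrr => [|j _]; last by apply: integral_ge0 => x _; exact: S_ge0.
apply: eq_bigr => i _.
rewrite Sbar0_rate numeraire_measure_rate// muleA -EFinM.
by rewrite mulrAC mulfV ?mul1r// gt_eqF// rate_gt0.
Qed.

Lemma numeraire_measure_consistent :
  numeraire_consistent T F S numeraire_measure.
Proof.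
move=> i j t A t_range FA x0; have mA := F_measurable t_range FA.
set B := [set x | 0 < S j i t x].
have FAB : F t (A `&` B).
  have -> : B = S j i t @^-1` `]0, +oo[.
    by apply/seteqP; split => x /=; rewrite in_itv/= andbT.
  exact (G_setI (F_sigma t_range) FA (S_adapted j i t_range (emeasurable_itv _))).
have mAB := F_measurable t_range FAB.
rewrite (integral_numeraire_measure i t_range (S_adapted i j t_range)) => //; last first.
  by move=> x; exact: S_ge0.
under eq_integral => x _ do
  rewrite (exchange_transfer (hS x t_range) (fun k => S_fin k x t_range)).
rewrite numeraire_measure_rate//.
have rate_inv_gt0 : (0 < (rate i)^-1)%R by rewrite invr_gt0 rate_gt0.
rewrite (exchange_matrixM (hS x0 zero_range) j rate_inv_gt0 (S0_rate_inv i x0)).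
rewrite S0_rate_inv S0_rate -muleA (muleA (rate j)%:E) -EFinM mulfV ?gt_eqF ?rate_gt0// mul1e.
rewrite (S_martT j t_range FAB) integral_mkcondr; congr (_ * _).
have memB x : (x \in B) = (0 < S j i t x) by apply/idP/idP => [/set_mem|/mem_set].
by apply: eq_integral => x _; rewrite patchE memB.
Qed.

Let F_T_of (t : R) B : (0 <= t <= T)%R -> F t B -> F T B.
Proof. by move=> t_range /(F_measurable t_range); case: hF => _ _ -> _ _. Qed.

Let inv_cancel (c : R) (a b : \bar R) : (0 < c)%R -> (c^-1)%:E * a = (c^-1)%:E * b -> a = b.
Proof.
move=> c0 /(congr1 (fun z => c%:E * z)).
by rewrite !muleA -EFinM mulfV ?gt_eqF// !mul1e.
Qed.

Section payoff.
Variable C : 'I_d -> Omega -> \bar R.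
Hypotheses (C_measurable : forall j, measurable_fun setT (C j))
  (C_value : forall x, value_vector (fun i j => S i j T x) (C ^~ x)).

Let C_ge0 j x : 0 <= C j x. Proof. by case: (C_value x). Qed.

Let CbarE x : Cbar S T C x = Sbar S o T x * C o x.
Proof. exact (Cbar_numeraire (hS x T_range) (fun j => S_fin j x T_range) (C_value x)). Qed.

Let integral_basket_Cbar B : measurable B ->
  \int[basket_measure]_(x in B) Cbar S T C x =
  ((\sum_j rate j)^-1)%:E * \int[Q1]_(x in B) C o x.
Proof.
move=> mB; have FTB : F T B by case: hF => _ _ -> _ _.
under eq_integral do rewrite CbarE.
rewrite (integral_basket_measure T_range)//.
- congr (_ * _); apply: eq_integral => x _.
  have [del del1 bvE] := basket_value_ge1 x T_range.
  have del0 : del != 0%R by rewrite gt_eqF// (lt_le_trans ltr01).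
  rewrite /Sbar -/(basket_value T x) bvE inver (negbTE del0).
  by rewrite muleAC -EFinM mulVf ?mul1e.
- apply: G_measurable_FT; apply: emeasurable_funM => //.
  exact (measurable_funeV_ge1 (basket_value_measurable T_range) (fun x => basket_value_ge1 x T_range)).
- by move=> x; rewrite mule_ge0// /Sbar inve_ge0; exact: basket_value_ge0.
Qed.

Variables (r : R) (Y : Omega -> \bar R).
Hypotheses (r_range : (0 <= r <= T)%R)
  (Cbar_int : \int[basket_measure]_x Cbar S T C x < +oo)
  (hY : cond_exp basket_measure (F r) (Cbar S T C) Y).

Let Y_basket_value B : F r B ->
  \int[Q1]_(x in B) (Y x * basket_value r x) = \int[Q1]_(x in B) C o x.
Proof.
move=> FB; have [GY Y0 YC] := hY; have mB := F_measurable r_range FB.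
apply: (inv_cancel basket_total_gt0).
by rewrite -integral_basket_Cbar// -(integral_basket_measure r_range GY Y0 FB) YC.
Qed.

Let integral_C_fin : \int[Q1]_x C o x < +oo.
Proof.
move: Cbar_int; rewrite integral_basket_Cbar//.
have : 0 <= \int[Q1]_x C o x by apply: integral_ge0 => x _.
case: (\int[Q1]_x C o x) => [c _ _|_|//]; first exact: ltry.
by rewrite gt0_muley ?ltxx// lte_fin invr_gt0.
Qed.

Let Y_basket_value_ae (U : Omega -> \bar R) : G_measurable (F r) U ->
  (forall x, 0 <= U x) ->
  (forall B, F r B -> \int[Q1]_(x in B) U x = \int[Q1]_(x in B) C o x) ->
  {ae Q1, forall x, Y x * basket_value r x = U x}.
Proof.
move=> GU U0 UC; have [GY Y0 _] := hY.
apply: (G_measurable_ae_eq (F_measurable r_range) (F_sigma r_range)) => //.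
- apply: (G_measurableM (F_sigma r_range)) => //.
  by apply: (G_measurable_sum (F_sigma r_range)) => j; exact: S_adapted.
- by move=> x; rewrite mule_ge0// basket_value_ge0.
- by rewrite Y_basket_value //; exact: F_setT.
- by move=> B FB; rewrite Y_basket_value// UC.
Qed.

Lemma basket_cond_exp_numeraire Z : cond_exp Q1 (F r) (C o) Z ->
  {ae Q1, forall x, Y x = Sbar S o r x * Z x}.
Proof.
move=> [GZ Z0 ZC]; apply: filterS (Y_basket_value_ae GZ Z0 ZC) => x <-.
have [del del1 bvE] := basket_value_ge1 x r_range.
have del0 : del != 0%R by rewrite gt_eqF// (lt_le_trans ltr01).
rewrite /Sbar -/(basket_value r x) bvE inver (negbTE del0).
by rewrite muleCA -EFinM mulVf ?mule1.
Qed.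

Lemma basket_cond_exp_active i W V :
  cond_exp (numeraire_measure i) (F r) (C i) W ->
  cond_exp Q1 (F r) (fun x => if S o i T x == 0 then C o x else 0) V ->
  {ae Q1, forall x, active S r x i -> Y x / Sbar S i r x = W x + S i o r x * V x}.
Proof.
move=> [GW W0 WC] [GV V0 VC].
have WS B : F r B -> \int[Q1]_(x in B) (W x * S o i r x) =
    \int[Q1]_(x in B) (if S o i T x == 0 then 0 else C o x).
  move=> FB; apply: (inv_cancel (rate_gt0 i)).
  rewrite -(integral_numeraire_measure i r_range GW W0 FB) (WC _ FB).
  rewrite (integral_numeraire_measure i T_range (G_measurable_FT (C_measurable i)) (C_ge0 i) (F_T_of r_range FB)).
  congr (_ * _); apply: eq_integral => x _.
  exact (value_vector_row (hS x T_range) (fun j => S_fin j x T_range) i (C_value x)).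
have GWS : G_measurable (F r) (fun x => W x * S o i r x).
  exact: (G_measurableM (F_sigma r_range) GW (S_adapted o i r_range)).
have WS0 x : 0 <= W x * S o i r x by rewrite mule_ge0// S_ge0.
have mSi0 : measurable_fun setT (fun x => S o i T x == 0).
  exact: measurable_fun_eqe (S_measurable o i T_range) (measurable_cst _).
have YU : {ae Q1, forall x, Y x * basket_value r x = W x * S o i r x + V x}.
  apply: Y_basket_value_ae => [|x|B FB]; first exact (G_measurableD (F_sigma r_range) GWS GV).
    by rewrite adde_ge0.
  have mB := F_measurable r_range FB.
  have mF f : G_measurable (F r) f -> measurable_fun B f.
    by move=> Gf; exact/measurable_funTS/(G_measurable_measurable_fun (F_measurable r_range) Gf).
  rewrite ge0_integralD//; [|exact: mF GWS|exact: mF GV].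
  rewrite WS// VC// -ge0_integralD//; last 4 first.
  - by move=> x _; case: ifP.
  - by apply/measurable_funTS/measurable_fun_ifT.
  - by move=> x _; case: ifP.
  - by apply/measurable_funTS/measurable_fun_ifT.
  by apply: eq_integral => x _; case: ifP; rewrite ?add0e ?adde0.
apply: filterS YU => x YU x_act; rewrite /Sbar inveK.
exact (change_numeraire (hS x r_range) (fun j => S_fin j x r_range) x_act (W0 x) (V0 x) YU).
Qed.

End payoff.

End numeraire_change.

Unset Implicit Arguments.

Theorem mainTheorem8 (R : realType) (dO : measure_display)
  (Omega : measurableType dO) (T : R) (F : R -> set (set Omega))
  (d : nat) (d_gt0 : (0 < d)%N)
  (S : 'I_d -> 'I_d -> R -> Omega -> \bar R)
  (Q1 : probability Omega R) :
  let one := Ordinal d_gt0 in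
  (0 < T)%R ->
  filtration T F ->
  (* S(t) is an exchange matrix *)
  (forall t x, (0 <= t <= T)%R -> exchange_matrix (fun i j => S i j t x)) ->
  (* adaptedness *)
  (forall i j t, (0 <= t <= T)%R -> G_measurable (F t) (S i j t)) ->
  (* right-continuous paths *)
  (forall i j x t, (0 <= t)%R -> (t < T)%R ->
     S i j ^~ x u @[u --> t^'+] --> S i j t x) ->
  (* A(0) = {1,...,d} *)
  (forall i x, active S 0%R x i) ->
  (* each S_{1,j} is a real-valued nonnegative Q1-martingale *)
  (forall j t x, (0 <= t <= T)%R -> S one j t x < +oo) ->
  (forall j t, (0 <= t <= T)%R -> \int[Q1]_x S one j t x < +oo) ->
  (forall j s t A, (0 <= s)%R -> (s <= t)%R -> (t <= T)%R -> F s A ->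
     \int[Q1]_(x in A) S one j t x = \int[Q1]_(x in A) S one j s x) ->
  exists Q : 'I_d -> probability Omega R,
    (* dQ_i/dQ_1 = S_{i,1}(0) S_{1,i}(T) *)
    (forall i A, measurable A ->
       Q i A = \int[Q1]_(x in A) (S i one 0%R x * S one i T x)) /\
    numeraire_consistent T F S Q /\
    (forall i A, measurable A -> Q1 A = 0 -> Q i A = 0) /\
    (forall A, measurable A -> (Q1 A = 0 <-> \sum_(i < d) Q i A = 0)) /\
    exists Qbar : probability Omega R,
      (forall x0 A, measurable A ->
         Qbar A = \sum_(i < d) Sbar S i 0%R x0 * Q i A) /\
      forall (r : R) (C : 'I_d -> Omega -> \bar R),
        (0 <= r <= T)%R ->
        (forall j, measurable_fun setT (C j)) ->
        (forall x, value_vector (fun i j => S i j T x) (C ^~ x)) ->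
        \int[Qbar]_x Cbar S T C x < +oo ->
        forall Y, cond_exp Qbar (F r) (Cbar S T C) Y ->
          (forall Z, cond_exp Q1 (F r) (C one) Z ->
             {ae Q1, forall x, Y x = Sbar S one r x * Z x}) /\
          (forall i W V,
             cond_exp (Q i) (F r) (C i) W ->
             cond_exp Q1 (F r)
               (fun x => if S one i T x == 0 then C one x else 0) V ->
             {ae Q1, forall x, active S r x i ->
                Y x / Sbar S i r x = W x + S i one r x * V x}).
Proof.
move=> one T_gt0 hF hS S_adapted _ active0 S_fin _ S_mart.
exists (numeraire_measure T_gt0 hF hS S_adapted active0 S_mart).
split; first exact: numeraire_measureE.
split; first exact: (numeraire_measure_consistent _ _ _ _ _ S_fin).
split; first exact: numeraire_measure_abs_cont.
split; first exact: numeraire_measure_equiv.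
exists (basket_measure T_gt0 hF hS S_adapted active0 S_mart).
split; first exact: basket_measureE.
move=> r C r_range C_meas C_value Cbar_int Y hY; split.
- exact (basket_cond_exp_numeraire S_fin C_meas C_value r_range Cbar_int hY).
- exact (basket_cond_exp_active S_fin C_meas C_value r_range Cbar_int hY).
Qed.
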